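(* There is no universal distributed algorithm that elects a leader for all feasible configurations of size $4$; that is, there is no pair $(D,f)$ of a DRIP $D$ and a decision function $f$ such that $(D,f)$ is a dedicated leader election algorithm for every feasible configuration with $4$ nodes.
   Context: Model. A configuration is a finite simple undirected connected graph $G$ in which each node $v$ is tagged with a non-negative integer $t_v$ (wakeup tag); size = number of nodes. Nodes are anonymous and communicate in synchronous global rounds. A node $v$ wakes up in the first global round $r\le t_v$ in which it receives a message, if any, and otherwise in global round $t_v$; its local clock is $0$ in its wakeup round, it acts from local round $1$, and nodes do not know the global clock. In each round a node transmits a message to all neighbours, listens, or terminates. A listening node receives $M$ if exactly one neighbour transmits ($M$), hears collision noise (distinct from silence and messages) if at least two neighbours transmit, and silence otherwise; a transmitting node hears nothing. The history $\mathcal H_v[i]$ of $v$ in local round $i$ is $(\emptyset)$ (transmitted, silence, or spontaneous wakeup at $i=0$), $(M)$ (received $M$, or woken by $M$ at $i=0$), or $( * )$ (collision). A DRIP is a function $D$ from finite history vectors to $\{\mathit{listen},\mathit{transmit}(M),\mathit{terminate}\}$; each node $v$ in local round $i\ge1$ performs $D(\mathcal H_v[0\ldots i-1])$, and every node eventually terminates permanently (first at local round $done_v$). A decision function $f$ maps $\mathcal H_v[0\ldots done_v]$ to $\{0,1\}$; $(D,f)$ is a dedicated leader election algorithm for $G$ if, when all nodes of $G$ execute $D$, exactly one node gets output $1$; $G$ is feasible if such a pair exists. *)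

From mathcomp Require Import all_boot.
Set Implicit Arguments. Unset Strict Implicit. Unset Printing Implicit Defensive.

(* Messages are natural numbers (any countable message set can be encoded). *)
Definition msg := nat.

Inductive hentry := HNone | HMsg of msg | HColl.

Inductive action := Listen | Transmit of msg | Terminate.

Definition is_term (a : action) : bool :=
  if a is Terminate then true else false.

(* A DRIP maps finite history vectors H[0..i-1] to an action;
   a decision function maps H[0..done] to {0,1} (here bool). *)
Definition drip := seq hentry -> action.
Definition decision := seq hentry -> bool.

(* A configuration of size n: a finite simple undirected connected graph on
   the nodes 'I_n (the labels are invisible to the algorithm) *)
Definition simple_connected_graph (n : nat) (adj : rel 'I_n) : Prop :=
  symmetric adj /\ irreflexive adj /\ (forall u v, connect adj u v).

Section Exec.
Variables (n : nat) (adj : rel 'I_n) (tag : 'I_n -> nat) (D : drip).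

(* Effective action of an awake node whose history so far is h = H[0..i-1]
   (so it acts in local round i = size h): once a node has terminated it
   stays terminated permanently. *)
Definition eff_action (h : seq hentry) : action :=
  if has (fun k => is_term (D (take k h))) (iota 1 (size h).-1)
  then Terminate else D h.

(* state: for each node, None = still asleep, Some h = awake with history
   h = H[0..i] after the current global round *)
Definition state_t := 'I_n -> option (seq hentry).

Definition transmits (st : state_t) (u : 'I_n) : option msg :=
  match st u with
  | Some h => if eff_action h is Transmit m then Some m else None
  | None => None
  end.

Definition reception (st : state_t) (v : 'I_n) : hentry :=
  match pmap id [seq transmits st u | u <- enum 'I_n & adj v u] with
  | [::] => HNone
  | [:: m] => HMsg m
  | _ => HColl
  end.

(* global round r, given the state st at the end of round r-1 *)
Definition step (st : state_t) (r : nat) : state_t := fun v =>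
  match st v with
  | Some h =>
      Some (rcons h (if eff_action h is Listen then reception st v else HNone))
  | None =>
      match reception st v with
      | HMsg m => if r <= tag v then Some [:: HMsg m] else None
      | _ => if r == tag v then Some [:: HNone] else None
      end
  end.

Fixpoint state (r : nat) : state_t :=
  match r with
  | 0 => step (fun _ => None) 0
  | r'.+1 => step (state r') r
  end.

(* node v terminates (first) in local round d and outputs b = f H[0..d] *)
Definition outputs (f : decision) (v : 'I_n) (b : bool) : Prop :=
  exists r h d, state r v = Some h /\ 0 < d /\ d < size h /\
    D (take d h) = Terminate /\
    (forall k, 0 < k < d -> D (take k h) <> Terminate) /\
    f (take d.+1 h) = b.

End Exec.

Definition dedicated_LE (n : nat) (adj : rel 'I_n) (tag : 'I_n -> nat)
  (D : drip) (f : decision) : Prop :=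
  (forall v, exists b, outputs adj tag D f v b) /\
  (exists v, outputs adj tag D f v true /\
     forall u, outputs adj tag D f u true -> u = v).

Definition feasible (n : nat) (adj : rel 'I_n) (tag : 'I_n -> nat) : Prop :=
  exists D f, dedicated_LE adj tag D f.

From mathcomp Require Import all_boot zify.
From Stdlib Require Import Classical.

Set Implicit Arguments. Unset Strict Implicit. Unset Printing Implicit Defensive.

(* Suppose (D, f) elects a leader in every feasible configuration of size 4.
   If D terminates after s rounds of silence, consider the star whose centre wakes
   at round s and whose leaves wake at round 0: the leaves hear nothing and have
   stopped by the time the centre wakes, so the centre hears nothing either. All
   four histories are silent, hence all four outputs coincide.
   Otherwise D never stops on silence. Let a leaf of the star whose centre wakes at
   round 1 stop at round r1. In the square i0 - i1 - i3 - i2 whose corner i3 wakes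
   at round r1 + 4, the nodes i0, i1, i2 behave like the centre and two leaves of
   that star until i3 wakes (two identical neighbours are heard exactly like
   three), so i3 wakes after its neighbours have stopped, only ever hears silence,
   and never terminates.
   Both configurations are feasible: with the algorithm that listens for a fixed
   number of rounds, transmits once and stops, the leader is the unique node that
   hears a collision. *)

Lemma rcons_nseq (T : Type) k (x : T) : rcons (nseq k x) x = nseq k.+1 x.
Proof. by elim: k => //= k ->. Qed.

Definition first_termination (D : drip) (h : seq hentry) (d : nat) : Prop :=
  [/\ 0 < d, d < size h, D (take d h) = Terminate &
      forall k, 0 < k < d -> D (take k h) <> Terminate].

Definition silent_lifetime (D : drip) (d : nat) : Prop :=
  [/\ 0 < d, D (nseq d HNone) = Terminate &
      forall k, 0 < k < d -> D (nseq k HNone) <> Terminate].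

Section Histories.
Variable D : drip.

Lemma eff_actionE h : (forall k, 0 < k < size h -> D (take k h) <> Terminate) ->
  eff_action D h = D h.
Proof.
move=> live; rewrite /eff_action; case: hasP => // -[k].
rewrite mem_iota add1n => /andP[k_gt0 k_lt].
case Dk: (D _) => // _; exfalso; apply: (live k) Dk; lia.
Qed.

Lemma eff_action_terminated h e d : 0 < d < size h -> D (take d h) = Terminate ->
  eff_action D (h ++ e) = Terminate.
Proof.
move=> /andP[d_gt0 d_lt] Dd; rewrite /eff_action; case: hasP => // -[].
exists d; last by rewrite takel_cat ?Dd // ltnW.
by rewrite mem_iota size_cat; lia.
Qed.

Lemma eff_action_nseq k : (forall j, 0 < j < k -> D (nseq j HNone) <> Terminate) ->
  eff_action D (nseq k HNone) = D (nseq k HNone).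
Proof.
move=> live; apply: eff_actionE => j; rewrite size_nseq => /andP[j_gt0 j_lt].
by rewrite take_nseq ?(ltnW j_lt) //; apply: live; rewrite j_gt0.
Qed.

Lemma first_termination_cat h e d d' :
  first_termination D h d -> first_termination D (h ++ e) d' -> d = d'.
Proof.
move=> [d_gt0 d_lt Dd min_d] [d'_gt0 _ Dd' min_d'].
case: (ltngtP d d') => // lt_dd'; exfalso.
  by apply: (min_d' d); rewrite ?d_gt0 // takel_cat // ltnW.
by apply: (min_d d'); rewrite ?d'_gt0 // -(takel_cat e) // ltnW // (ltn_trans lt_dd').
Qed.

Lemma first_termination_nseq m d :
  first_termination D (nseq m HNone) d <-> d < m /\ silent_lifetime D d.
Proof.
rewrite /first_termination size_nseq; split.
  move=> [d_gt0 d_lt Dd min_d]; split=> //; split=> //.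
    by rewrite -(take_nseq _ (ltnW d_lt)).
  move=> k /andP[k_gt0 k_lt]; rewrite -(take_nseq _ (ltnW (ltn_trans k_lt d_lt))).
  by apply: min_d; rewrite k_gt0.
move=> [d_lt [d_gt0 Dd min_d]]; split; rewrite ?take_nseq ?(ltnW d_lt) //.
move=> k /andP[k_gt0 k_lt]; rewrite take_nseq; last exact: ltnW (ltn_trans k_lt d_lt).
by apply: min_d; rewrite k_gt0.
Qed.

Lemma silent_lifetime_uniq d d' : silent_lifetime D d -> silent_lifetime D d' -> d = d'.
Proof.
move=> [d_gt0 Dd min_d] [d'_gt0 Dd' min_d'].
by case: (ltngtP d d') => // lt; exfalso; [apply: (min_d' d) | apply: (min_d d')];
  rewrite ?d_gt0 ?d'_gt0.
Qed.

End Histories.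

Section Run.
Variables (n : nat) (adj : rel 'I_n) (tag : 'I_n -> nat) (D : drip).
Local Notation run := (state adj tag D).

Lemma stateS r : run r.+1 = step adj tag D (run r) r.+1.
Proof. by []. Qed.

Lemma state_awakeS r v h : run r v = Some h ->
  run r.+1 v = Some (rcons h (if eff_action D h is Listen
                              then reception adj D (run r) v else HNone)).
Proof. by rewrite stateS /step => ->. Qed.

Lemma state_extend r v h k : run r v = Some h ->
  exists2 e, size e = k & run (r + k) v = Some (h ++ e).
Proof.
move=> run_v; elim: k => [|k [e <- IH]]; first by exists [::]; rewrite ?addn0 ?cats0.
by rewrite addnS (state_awakeS IH) rcons_cat; eexists; last reflexivity; rewrite size_rcons.
Qed.

Lemma state_terminated r r' v h d : run r v = Some h -> 0 < d < size h ->
  D (take d h) = Terminate -> r <= r' ->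
  exists2 h', run r' v = Some h' & eff_action D h' = Terminate.
Proof.
move=> run_v d_lt Dd le_rr'; have [e _] := state_extend (r' - r) run_v.
rewrite subnKC // => run_v'; exists (h ++ e) => //.
exact: eff_action_terminated d_lt Dd.
Qed.

Lemma transmits_terminated r r' v h d : run r v = Some h -> 0 < d < size h ->
  D (take d h) = Terminate -> r <= r' -> transmits D (run r') v = None.
Proof.
move=> run_v d_lt Dd /(state_terminated run_v d_lt Dd)[h' run_v' Dh'].
by rewrite /transmits run_v' Dh'.
Qed.

Lemma state_tag_awake v : exists h, run (tag v) v = Some h.
Proof.
case Ev: (tag v) => [|t] /=; rewrite /step.
  by case: reception => [|m|]; rewrite Ev /=; eexists.
case: (run t v) => [h|]; first by eexists.
by case: reception => [|m|]; rewrite Ev ?leqnn ?eqxx; eexists.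
Qed.

Lemma outputsP f v b : outputs adj tag D f v b <->
  exists r h d, [/\ run r v = Some h, first_termination D h d & f (take d.+1 h) = b].
Proof.
by split=> [[r [h [d [? [? [? [? [? ?]]]]]]]] | [r [h [d [? [? ? ? ?] ?]]]]];
  exists r, h, d.
Qed.

Lemma outputs_uniq f v b b' :
  outputs adj tag D f v b -> outputs adj tag D f v b' -> b = b'.
Proof.
have later_agrees r r' h h' d d' : r <= r' -> run r v = Some h -> run r' v = Some h' ->
    first_termination D h d -> first_termination D h' d' ->
    f (take d.+1 h) = f (take d'.+1 h').
  move=> le_rr' run_v run_v' Fd Fd'; have [e _] := state_extend (r' - r) run_v.
  rewrite subnKC // run_v' => -[Eh']; rewrite Eh' in Fd' *.
  have [_ d_lt _ _] := Fd.
  by rewrite -(first_termination_cat Fd Fd') takel_cat.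
move=> /outputsP[r [h [d [run_v Fd <-]]]] /outputsP[r' [h' [d' [run_v' Fd' <-]]]].
case: (leqP r r') => [le | /ltnW le].
  exact: later_agrees _ _ _ _ _ _ le run_v run_v' Fd Fd'.
by symmetry; apply: later_agrees _ _ _ _ _ _ le run_v' run_v Fd' Fd.
Qed.

Lemma reception_ext (st st' : state_t n) v : st =1 st' ->
  reception adj D st v = reception adj D st' v.
Proof.
move=> E; have Et : transmits D st =1 transmits D st' by move=> u; rewrite /transmits E.
by rewrite /reception (eq_map Et).
Qed.

Lemma state_twins u v : tag u = tag v -> adj u =1 adj v -> forall r, run r u = run r v.
Proof.
move=> Etag Eadj.
have Erec st : reception adj D st u = reception adj D st v by rewrite /reception (eq_filter Eadj).
by elim=> [|r IH] /=; rewrite /step ?IH Erec Etag.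
Qed.

Definition silent_at r v := forall h, run r v = Some h -> h = nseq (size h) HNone.

Definition silent v := forall r, silent_at r v.

Definition quiet_round r v :=
  reception adj D (run r) v = HNone \/
  exists2 h, run r v = Some h & eff_action D h = Terminate.

Lemma silent_atS r v : silent_at r v -> quiet_round r v -> silent_at r.+1 v.
Proof.
rewrite /quiet_round => silent_v quiet h'; rewrite stateS /step.
case run_v: (run r v) => [h|] in silent_v quiet *.
  have {}quiet : (if eff_action D h is Listen then reception adj D (run r) v else HNone) = HNone.
    by case: quiet => [-> | [_ [<-] ->]]; case: eff_action.
  by rewrite quiet => -[<-]; rewrite (silent_v h) // rcons_nseq size_nseq.
by case: quiet => [-> | [? //]]; case: eqP => // _ [<-].
Qed.

Lemma silent_after r0 v : (forall r, r <= r0 -> silent_at r v) ->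
  (forall r, r0 <= r -> quiet_round r v) -> silent v.
Proof.
move=> before after; elim=> [|r IH]; first exact: before.
case: (leqP r.+1 r0) => [|lt]; first exact: before.
exact: silent_atS IH (after r lt).
Qed.

Lemma outputs_silentE f v b : outputs adj tag D f v b -> silent v ->
  exists2 d, silent_lifetime D d & b = f (nseq d.+1 HNone).
Proof.
move=> /outputsP[r [h [d [run_v Fd <-]]]] /(_ r h run_v) Eh.
rewrite Eh in Fd *; have [d_lt Sd] := (first_termination_nseq _ _ _).1 Fd.
by exists d; rewrite ?take_nseq.
Qed.

Lemma outputs_nseq f v r m d : run r v = Some (nseq m HNone) -> d < m ->
  silent_lifetime D d -> outputs adj tag D f v (f (nseq d.+1 HNone)).
Proof.
move=> run_v d_lt Sd; apply/outputsP; exists r, (nseq m HNone), d; split=> //.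
  exact/first_termination_nseq.
by rewrite take_nseq.
Qed.

Lemma outputs_silent f v d : silent v -> silent_lifetime D d ->
  outputs adj tag D f v (f (nseq d.+1 HNone)).
Proof.
move=> silent_v Sd; have [h awake_v] := state_tag_awake v.
have [e size_e run_v] := state_extend d.+1 awake_v.
have Ehe := silent_v _ _ run_v; rewrite Ehe in run_v; apply: outputs_nseq run_v _ Sd.
by rewrite size_cat size_e addnS ltnS leq_addl.
Qed.

Lemma dedicated_LE_of_leader f v : (forall u, exists b, outputs adj tag D f u b) ->
  outputs adj tag D f v true -> (forall u, u != v -> outputs adj tag D f u false) ->
  dedicated_LE adj tag D f.
Proof.
move=> all_out out_v out_others; split=> //; exists v; split=> // u out_u.
by case: (eqVneq u v) => // /out_others /(outputs_uniq out_u).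
Qed.

Lemma silent_no_leader f (u w : 'I_n) : (forall v, silent v) -> u != w ->
  ~ dedicated_LE adj tag D f.
Proof.
move=> silent_all neq_uw [all_out [v [out_v leader_v]]].
have [x neq_xv] : exists x : 'I_n, x != v.
  by case: (eqVneq u v) => [<-|]; [exists w; rewrite eq_sym | exists u].
have [b out_x] := all_out x.
have [d Sd Eb] := outputs_silentE out_x (silent_all x).
have [d' Sd' Etrue] := outputs_silentE out_v (silent_all v).
move: out_x; rewrite Eb (silent_lifetime_uniq Sd Sd') -Etrue => /leader_v/eqP.
by rewrite (negbTE neq_xv).
Qed.

End Run.

Lemma state_retag n (adj : rel 'I_n) (tag tag' : 'I_n -> nat) D v r :
  (forall w, w != v -> tag w = tag' w) -> r < tag v -> r < tag' v ->
  state adj tag D r =1 state adj tag' D r.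
Proof.
move=> Etag; elim: r => [|r IH] lt lt' w /=; rewrite /step.
  case: (eqVneq w v) => [->|/Etag-> //].
  by rewrite (ltn_eqF lt) (ltn_eqF lt'); case: reception.
have {}IH := IH (ltnW lt) (ltnW lt'); rewrite IH (reception_ext _ _ _ IH).
case: (eqVneq w v) => [->|/Etag-> //].
by rewrite (ltnW lt) (ltnW lt') (ltn_eqF lt) (ltn_eqF lt').
Qed.

Lemma step_congr n n' (adj : rel 'I_n) (adj' : rel 'I_n') tag tag' D st st' r v v' :
  st v = st' v' -> reception adj D st v = reception adj' D st' v' -> tag v = tag' v' ->
  step adj tag D st r v = step adj' tag' D st' r v'.
Proof. by move=> Est Erec Etag; rewrite /step Est Erec Etag. Qed.

Lemma transmits_congr n n' D (st : state_t n) (st' : state_t n') v v' :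
  st v = st' v' -> transmits D st v = transmits D st' v'.
Proof. by rewrite /transmits => ->. Qed.

Lemma connected_to_hub n (adj : rel 'I_n) (c : 'I_n) : symmetric adj -> irreflexive adj ->
  (forall u, connect adj u c) -> simple_connected_graph adj.
Proof.
move=> adj_sym adj_irr to_c; split=> //; split=> // u v.
by apply: connect_trans (to_c u) _; rewrite (sym_connect_sym adj_sym).
Qed.

Definition i0 : 'I_4 := @Ordinal 4 0 isT.
Definition i1 : 'I_4 := @Ordinal 4 1 isT.
Definition i2 : 'I_4 := @Ordinal 4 2 isT.
Definition i3 : 'I_4 := @Ordinal 4 3 isT.

Lemma enum_ord4 : enum 'I_4 = [:: i0; i1; i2; i3].
Proof. by apply: (inj_map val_inj); rewrite val_enum_ord. Qed.

Lemma ord4P (v : 'I_4) : [\/ v = i0, v = i1, v = i2 | v = i3].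
Proof.
by case: v => -[|[|[|[|//]]]] ?; [constructor 1 | constructor 2 | constructor 3 | constructor 4];
  apply: val_inj.
Qed.

Definition hear (l : seq (option msg)) : hentry :=
  match pmap id l with [::] => HNone | [:: m] => HMsg m | _ => HColl end.

Lemma reception4 (adj : rel 'I_4) D st v :
  reception adj D st v = hear [seq transmits D st u | u <- [:: i0; i1; i2; i3] & adj v u].
Proof. by rewrite /reception enum_ord4. Qed.

Definition star : rel 'I_4 := fun u v => (val u == 0) (+) (val v == 0).
Definition star_tag (T : nat) (u : 'I_4) : nat := if val u == 0 then T else 0.

(* The 4-cycle i0 - i1 - i3 - i2 - i0, i.e. K_{2,2} with sides {i1, i2} and {i0, i3}. *)
Definition square : rel 'I_4 := fun u v =>
  ((val u == 1) || (val u == 2)) (+) ((val v == 1) || (val v == 2)).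
Definition square_tag (T : nat) (u : 'I_4) : nat :=
  if val u == 0 then 1 else if val u == 3 then T else 0.

Lemma star_connected : simple_connected_graph star.
Proof.
apply: (connected_to_hub (c := i0)) => [u v | u | u]; rewrite /star; first exact: addbC.
  exact: addbb.
by case: (ord4P u) => ->; [exact: connect0 | exact: connect1 ..].
Qed.

Lemma square_connected : simple_connected_graph square.
Proof.
apply: (connected_to_hub (c := i0)) => [u v | u | u]; rewrite /square; first exact: addbC.
  exact: addbb.
case: (ord4P u) => ->; [exact: connect0 | exact: connect1 | exact: connect1 |].
by apply: (connect_trans (y := i1)); exact: connect1.
Qed.

Definition is_coll (e : hentry) : bool := if e is HColl then true else false.

Definition beep (B : nat) : drip := fun h =>
  if has is_coll h then Terminate
  else if size h <= B then Listen
  else if size h == B.+1 then Transmit 0 else Terminate.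

Definition heard_collision : decision := has is_coll.

Lemma beep_nseq B k : beep B (nseq k HNone) =
  if k <= B then Listen else if k == B.+1 then Transmit 0 else Terminate.
Proof. by rewrite /beep has_nseq andbF size_nseq. Qed.

Lemma beep_lifetime B : silent_lifetime (beep B) B.+2.
Proof.
split=> // [|k /andP[_ k_lt]]; rewrite beep_nseq.
  by rewrite ifF ?ifF //; lia.
by case: ifP => // /negbT B_lt; rewrite ifT //; lia.
Qed.

Lemma eff_beep_nseq B k : k <= B.+2 ->
  eff_action (beep B) (nseq k HNone) = beep B (nseq k HNone).
Proof.
have [_ _ alive] := beep_lifetime B.
move=> le_k; apply: eff_action_nseq => j /andP[j_gt0 j_lt].
by apply: alive; rewrite j_gt0 (leq_trans j_lt).
Qed.

Lemma heard_collision_nseq k : heard_collision (nseq k HNone) = false.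
Proof. by rewrite /heard_collision has_nseq andbF. Qed.

Section StarRun.
Variables (D : drip) (T : nat).
Hypothesis T_gt0 : 0 < T.
Local Notation run := (state star (star_tag T) D).

Lemma star_asleep r : r <= T ->
  (forall u, u != i0 -> run r u = Some (nseq r.+1 HNone)) /\
  run r i0 = if r < T then None else Some [:: HNone].
Proof.
elim: r => [|r IH] le_rT.
  split=> [u|]; last by rewrite /= /step reception4 /= T_gt0 (ltn_eqF T_gt0).
  by case: (ord4P u) => -> // _; rewrite /= /step reception4.
have [leaves hub] := IH (ltnW le_rT); rewrite le_rT in hub.
split=> [u /[dup] u_leaf /leaves run_u | ].
  rewrite (state_awakeS run_u).
  have -> : reception star D (run r) u = HNone.
    by case: (ord4P u) u_leaf => -> // _; rewrite reception4 /= /transmits hub.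
  by case: eff_action; rewrite rcons_nseq.
rewrite stateS /step hub reception4 /= /transmits !leaves //.
by case: eff_action => [|m|]; rewrite /= /star_tag /=; case: (ltngtP r.+1 T) le_rT.
Qed.

Lemma star_silent : D (nseq T HNone) = Terminate -> forall v, silent star (star_tag T) D v.
Proof.
move=> DT v; have [leaves _] := star_asleep (leqnn T).
have T_lt : 0 < T < size (nseq T.+1 HNone) by rewrite size_nseq T_gt0 /=.
have Dtake : D (take T (nseq T.+1 HNone)) = Terminate by rewrite take_nseq.
apply: (silent_after (r0 := T)) => r le_r.
  have [leaves_r hub_r] := star_asleep le_r; rewrite /silent_at.
  case: (eqVneq v i0) => [-> | /leaves_r-> h [<-]]; last by rewrite /= size_nseq.
  by move=> h; rewrite hub_r; case: ifP => // _ [<-].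
case: (eqVneq v i0) => [-> | v_leaf]; [left | right].
  have leaf_off u : u != i0 -> transmits D (run r) u = None.
    by move=> /leaves run_u; apply: transmits_terminated run_u T_lt Dtake le_r.
  by rewrite reception4 /= !leaf_off.
exact: state_terminated (leaves v v_leaf) T_lt Dtake le_r.
Qed.

End StarRun.

Section StarBeep.
Variable T : nat.
Hypothesis T_gt0 : 0 < T.
Local Notation run := (state star (star_tag T) (beep T)).

Lemma star_feasible : feasible star (star_tag T).
Proof.
exists (beep T), heard_collision.
have [leaves hub] := star_asleep (beep T) T_gt0 (leqnn T); rewrite ltnn in hub.
have leaves1 u : u != i0 -> run T.+1 u = Some (nseq T.+2 HNone).
  by move=> /leaves/state_awakeS->; rewrite eff_beep_nseq // beep_nseq ltnn eqxx rcons_nseq.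
have leaves2 u : u != i0 -> run T.+2 u = Some (nseq T.+3 HNone).
  move=> /leaves1/state_awakeS->.
  by rewrite eff_beep_nseq // beep_nseq !ifF ?rcons_nseq //; lia.
have hub2 : run T.+2 i0 = Some [:: HNone; HColl; HNone].
  have hub_listens : beep T [:: HNone] = Listen by rewrite /beep /= T_gt0.
  have hub1 : run T.+1 i0 = Some [:: HNone; HColl].
    rewrite (state_awakeS hub) reception4 /= /transmits !leaves //.
    by rewrite eff_beep_nseq // beep_nseq ltnn eqxx /eff_action /= hub_listens.
  rewrite (state_awakeS hub1) eff_actionE // => -[|[|//]] //=.
  by rewrite hub_listens.
have leaf_out u : u != i0 -> outputs star (star_tag T) (beep T) heard_collision u false.
  move=> /leaves2 run_u; rewrite -(heard_collision_nseq T.+3).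
  exact: outputs_nseq run_u (ltnSn _) (beep_lifetime T).
have hub_out : outputs star (star_tag T) (beep T) heard_collision i0 true.
  apply/outputsP; exists T.+2, [:: HNone; HColl; HNone], 2; split=> //.
  by split=> // -[|[|//]] //= _; rewrite /beep /= T_gt0.
apply: (dedicated_LE_of_leader _ hub_out leaf_out) => u.
by case: (eqVneq u i0) => [-> | /leaf_out]; eexists; eassumption.
Qed.

End StarBeep.

Section SquareRun.
Variables (D : drip) (T : nat).
Local Notation sq := (state square (square_tag T) D).
Local Notation st := (state star (star_tag 1) D).

Lemma square_like_star r : r < T ->
  [/\ sq r i0 = st r i0, sq r i1 = st r i1, sq r i2 = st r i1 & sq r i3 = None].
Proof.
elim: r => [|r IH] lt_rT.
  by rewrite /= /step !reception4 /= /square_tag /= (ltn_eqF lt_rT).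
have [E0 E1 E2 E3] := IH (ltnW lt_rT).
have [F2 F3] : (st r i2 = st r i1) /\ (st r i3 = st r i1) by split; apply: state_twins.
have silent3 : transmits D (sq r) i3 = None by rewrite /transmits E3.
rewrite !stateS; split; try apply: step_congr => //;
  rewrite ?reception4 /= ?silent3 ?(transmits_congr D E0, transmits_congr D E1,
    transmits_congr D E2, transmits_congr D F2, transmits_congr D F3).
1-3: by case: transmits.
by rewrite /step E3 reception4 /= (transmits_congr D E1) (transmits_congr D E2)
  /square_tag /= (ltn_eqF lt_rT); case: transmits.
Qed.

End SquareRun.

Lemma square_late_corner_silent D T r1 h d : r1 < T ->
  state star (star_tag 1) D r1 i1 = Some h -> 0 < d < size h -> D (take d h) = Terminate ->
  silent square (square_tag T) D i3.
Proof.
move=> lt_r1T run_i1 d_lt Dd; apply: (silent_after (r0 := r1)) => r le_r.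
  by move=> h'; have [_ _ _ ->] := square_like_star D (leq_ltn_trans le_r lt_r1T).
have [_ E1 E2 _] := square_like_star D lt_r1T.
rewrite run_i1 in E1 E2; left; rewrite reception4 /=.
by rewrite (transmits_terminated E1 d_lt Dd le_r) (transmits_terminated E2 d_lt Dd le_r).
Qed.

Lemma square_starves_late_corner D f :
  ~ (exists s, 0 < s /\ D (nseq s HNone) = Terminate) ->
  dedicated_LE star (star_tag 1) D f ->
  exists2 T, 3 < T & ~ dedicated_LE square (square_tag T) D f.
Proof.
move=> never_stops [all_out _].
have [_ /outputsP[r1 [h [d [run_i1 [d_gt0 d_lt Dd _] _]]]]] := all_out i1.
exists r1.+4 => // -[all_out' _].
have [b3 out3] := all_out' i3.
have silent3 : silent square (square_tag r1.+4) D i3.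
  by apply: square_late_corner_silent run_i1 _ Dd; rewrite ?d_gt0 //; lia.
have [d3 [d3_gt0 Dd3 _] _] := outputs_silentE out3 silent3.
by apply: never_stops; exists d3.
Qed.

Section SquareBeep.
Variable T : nat.
Hypothesis T_gt3 : 3 < T.
Local Notation run := (state square (square_tag T) (beep 1)).

(* Before round 4 the corner i3 sleeps whatever its tag, so these rounds can be computed. *)
Lemma square_beep_early r : r < 4 -> run r =1 state square (square_tag 4) (beep 1) r.
Proof.
move=> lt_r4; apply: (@state_retag _ _ _ _ _ i3); rewrite /square_tag //=.
  by move=> w; case: (ord4P w) => ->.
exact: leq_trans T_gt3.
Qed.

Lemma square_beep_round3 :
  [/\ run 3 i0 = Some [:: HNone; HColl; HNone], run 3 i1 = Some (nseq 4 HNone),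
      run 3 i2 = Some (nseq 4 HNone) & forall r, r <= 3 -> run r i3 = None].
Proof.
rewrite !square_beep_early //; split.
1-3: by rewrite /state /step /reception !enum_ord4; vm_compute.
move=> r le_r3; rewrite square_beep_early ?ltnS //.
by case: r le_r3 => [|[|[|[|//]]]] _; rewrite /state /step /reception !enum_ord4; vm_compute.
Qed.

Lemma square_feasible : feasible square (square_tag T).
Proof.
exists (beep 1), heard_collision.
have [run3_i0 run3_i1 run3_i2 asleep3] := square_beep_round3.
have side_out u : run 3 u = Some (nseq 4 HNone) ->
    outputs square (square_tag T) (beep 1) heard_collision u false.
  move=> run_u; rewrite -(heard_collision_nseq 4).
  exact: outputs_nseq run_u _ (beep_lifetime 1).
have silent3 : silent square (square_tag T) (beep 1) i3.
  apply: (silent_after (r0 := 3)) => r le_r; first by move=> h; rewrite asleep3.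
  have off u : run 3 u = Some (nseq 4 HNone) -> transmits (beep 1) (run r) u = None.
    by move=> run_u; apply: (transmits_terminated (d := 3) run_u).
  by left; rewrite reception4 /= !off.
have hub_out : outputs square (square_tag T) (beep 1) heard_collision i0 true.
  apply/outputsP; exists 3, [:: HNone; HColl; HNone], 2; split=> //.
  by split=> // -[|[|//]].
have corner_out : outputs square (square_tag T) (beep 1) heard_collision i3 false.
  by rewrite -(heard_collision_nseq 4); apply: outputs_silent silent3 (beep_lifetime 1).
have others_out u : u != i0 -> outputs square (square_tag T) (beep 1) heard_collision u false.
  by case: (ord4P u) => -> // _; [apply: side_out run3_i1 | apply: side_out run3_i2].
apply: (dedicated_LE_of_leader _ hub_out others_out) => u.
by case: (eqVneq u i0) => [-> | /others_out]; eexists; eassumption.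
Qed.

End SquareBeep.

Theorem proposition4 :
  ~ exists (D : drip) (f : decision),
      forall (adj : rel 'I_4) (tag : 'I_4 -> nat),
        simple_connected_graph adj -> feasible adj tag ->
        dedicated_LE adj tag D f.
Proof.
move=> [D [f universal]].
have star_LE T : 0 < T -> dedicated_LE star (star_tag T) D f.
  by move=> T_gt0; apply: universal star_connected (star_feasible T_gt0).
case: (classic (exists s, 0 < s /\ D (nseq s HNone) = Terminate)).
  move=> [s [s_gt0 Ds]].
  exact: silent_no_leader (star_silent s_gt0 Ds) (isT : i0 != i1) (star_LE s s_gt0).
move=> never_stops.
have [T T_gt3 no_LE] := square_starves_late_corner never_stops (star_LE 1 isT).
by apply: no_LE; apply: universal square_connected (square_feasible T_gt3).
Qed.
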